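(* Let $k$ be a field of characteristic $0$, $n\ge 1$, $R=k[x_1,\dots,x_n]$, and let $M$ be a holonomic $D(R,k)$-module. Let $S=k[x_n]\setminus\{0\}$ and $R'=S^{-1}R=k(x_n)[x_1,\dots,x_{n-1}]$. Then $S^{-1}M$ is a holonomic $D(R',k(x_n))$-module.
   Context: For a polynomial ring $R=k[x_1,\dots,x_n]$ over a field $k$ of characteristic $0$, $D(R,k)$ is the ring of $k$-linear differential operators, $D(R,k)=R\langle\partial_1,\dots,\partial_n\rangle$ with $\partial_i=\partial/\partial x_i$. The Bernstein filtration $\mathcal F_i$ is the $k$-span of the monomials $x_1^{a_1}\cdots x_n^{a_n}\partial_1^{b_1}\cdots\partial_n^{b_n}$ with $\sum a_j+\sum b_j\le i$; its associated graded ring is a polynomial ring $k[x_1,\dots,x_n,\xi_1,\dots,\xi_n]$. A finitely generated $D(R,k)$-module $M$ is holonomic if $M=0$ or, for a filtration $\mathcal M_0\subseteq\mathcal M_1\subseteq\cdots$ of $M$ by finite-dimensional $k$-spaces with $\bigcup\mathcal M_i=M$ and $\mathcal F_i\mathcal M_j\subseteq\mathcal M_{i+j}$ (a good filtration), the associated graded module has Krull dimension $n$ over $k[x,\xi]$. Equivalently, $M$ is holonomic iff it admits such a filtration (by finite-dimensional $k$-spaces, exhaustive, compatible with the Bernstein filtration) with $\dim_k\mathcal M_i\le \eta\, i^n$ for some constant $\eta$ and all $i$. The same definitions apply to $R'=k(x_n)[x_1,\dots,x_{n-1}]$ over the field $k(x_n)$. *)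

From HB Require Import structures.
From mathcomp Require Import all_boot all_order all_algebra.
Set Implicit Arguments. Unset Strict Implicit. Unset Printing Implicit Defensive.
Import Order.TTheory GRing.Theory Num.Theory.
Local Open Scope ring_scope.

Definition ratfun (k : fieldType) : fieldType := {fraction {poly k}}.
Definition ratfunE (k : fieldType) (p : {poly k}) : ratfun k :=
  @FracField.tofrac {poly k} p.

Definition klinear (F : fieldType) (V : lmodType F) (f : V -> V) : Prop :=
  forall (a : F) (u v : V), f (a *: u + v) = a *: f u + f v.

(* A module over the Weyl algebra D(F[x_1..x_n], F) = F<x_i, d_i>:
   an F-vector space V with F-linear operators X i (mult. by x_i) and
   D i (action of d_i = d/dx_i) satisfying the defining relations
   [x_i,x_j] = 0, [d_i,d_j] = 0, [d_i,x_j] = delta_ij. *)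
Definition weyl_module (F : fieldType) (V : lmodType F) (n : nat)
    (X D : 'I_n -> V -> V) : Prop :=
  [/\ forall i, klinear (X i),
      forall i, klinear (D i),
      forall i j v, X i (X j v) = X j (X i v),
      forall i j v, D i (D j v) = D j (D i v)
    & forall i j v, D i (X j v) - X j (D i v) = (if i == j then v else 0)].

Definition in_span (F : fieldType) (V : lmodType F) (s : seq V) (v : V) : Prop :=
  exists c : 'I_(size s) -> F, v = \sum_(i < size s) c i *: s`_i.

(* Holonomicity via the (Bernstein) criterion of the context: there is a
   filtration M_0 <= M_1 <= ... by finite-dimensional subspaces
   (M_i = span (Mf i)), exhaustive, compatible with the Bernstein filtration
   (x_j M_i, d_j M_i <= M_(i+1)), and with dim M_i <= eta * i^n
   (dim M_i <= b  iff  M_i is spanned by at most b vectors). *)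
Definition holonomic (F : fieldType) (V : lmodType F) (n : nat)
    (X D : 'I_n -> V -> V) : Prop :=
  exists (Mf : nat -> seq V) (eta : nat),
  [/\ forall i v, in_span (Mf i) v -> in_span (Mf i.+1) v,
      forall v, exists i, in_span (Mf i) v,
      forall i j v, in_span (Mf i) v ->
          in_span (Mf i.+1) (X j v) /\ in_span (Mf i.+1) (D j v)
    & forall i, exists s : seq V,
          (size s <= eta * i ^ n)%N /\ forall v, in_span (Mf i) v <-> in_span s v].

Definition poly_act (k : fieldType) (M : lmodType k) (T : M -> M)
    (s : {poly k}) (v : M) : M :=
  \sum_(i < size s) s`_i *: iter i T v.

(* iota : M -> N exhibits N (a D(k(x_n)[x_1..x_m], k(x_n))-module) as the
   localization S^{-1} M, S = k[x_n] \ {0}, with its induced structure: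
   iota is k-linear, commutes with x_i, d_i (i <= m), sends x_n to
   multiplication by x_n in k(x_n), every element is s^{-1} iota(v), and
   iota(v) = 0 iff s v = 0 for some nonzero s in k[x_n]. *)
Definition is_localization (k : fieldType) (m : nat) (M : lmodType k)
    (X D : 'I_m.+1 -> M -> M) (N : lmodType (ratfun k))
    (X' D' : 'I_m -> N -> N) (iota : M -> N) : Prop :=
  [/\ forall (a : k) (u v : M),
        iota (a *: u + v) = ratfunE a%:P *: iota u + iota v,
      forall i v, iota (X (lift ord_max i) v) = X' i (iota v),
      forall i v, iota (D (lift ord_max i) v) = D' i (iota v),
      forall v, iota (X ord_max v) = ratfunE 'X *: iota v
    & (forall y : N, exists (v : M) (s : {poly k}),
          s != 0 /\ y = (ratfunE s)^-1 *: iota v) /\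
      (forall v : M, iota v = 0 ->
          exists s : {poly k}, s != 0 /\ poly_act (X ord_max) s v = 0)].

(* The localized filtration is the image of a holonomic filtration (M_i) of M.
   If u_1, ..., u_r in M_i have k(x_n)-linearly independent images in S^-1 M,
   then the vectors x_n^a u_j (a <= i) are k-linearly independent and lie in
   M_(2i); hence (i+1) r <= dim M_(2i) <= eta (2i)^(m+1), so the localized
   filtration has dimension at most eta 2^(m+1) i^m over k(x_n). *)

From HB Require Import structures.
From mathcomp Require Import all_boot all_order all_algebra.
From Stdlib Require Import Classical.
Set Implicit Arguments. Unset Strict Implicit. Unset Printing Implicit Defensive.
Import GRing.Theory.
Local Open Scope ring_scope.

Section Span.
Variables (F : fieldType) (V : lmodType F).

Definition free_family (I : finType) (f : I -> V) :=
  forall c : I -> F, \sum_x c x *: f x = 0 -> forall x, c x = 0.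

Lemma in_span0 (s : seq V) : in_span s 0.
Proof. by exists (fun _ => 0); rewrite big1 // => i _; rewrite scale0r. Qed.

Lemma in_spanD (s : seq V) u v : in_span s u -> in_span s v -> in_span s (u + v).
Proof.
move=> [c ->] [d ->]; exists (fun i => c i + d i).
by rewrite -big_split /=; apply: eq_bigr => i _; rewrite scalerDl.
Qed.

Lemma in_spanZ (s : seq V) a u : in_span s u -> in_span s (a *: u).
Proof.
move=> [c ->]; exists (fun i => a * c i).
by rewrite scaler_sumr; apply: eq_bigr => i _; rewrite scalerA.
Qed.

Lemma in_span_sum (s : seq V) (I : finType) (c : I -> F) (f : I -> V) :
  (forall x, in_span s (f x)) -> in_span s (\sum_x c x *: f x).
Proof.
move=> sf; apply: (big_ind (in_span s)); [exact: in_span0|exact: in_spanD|].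
by move=> x _; apply: in_spanZ.
Qed.

Lemma in_span_nth (s : seq V) j : in_span s s`_j.
Proof.
have [lt_js|le_sj] := ltnP j (size s); last by rewrite nth_default //; exact: in_span0.
exists (fun i => (i == Ordinal lt_js)%:R).
rewrite (bigD1 (Ordinal lt_js)) //= eqxx scale1r big1 ?addr0 //.
by move=> i /negbTE ->; rewrite scale0r.
Qed.

Lemma in_span_mem (s : seq V) v : v \in s -> in_span s v.
Proof. by move=> vs; rewrite -(nth_index 0 vs); exact: in_span_nth. Qed.

Lemma in_span_cons (x : V) (s : seq V) v :
  in_span (x :: s) v <-> exists a w, in_span s w /\ v = a *: x + w.
Proof.
split=> [[c ->]|[a [w [[c ->] ->]]]].
  rewrite big_ord_recl /=; exists (c ord0), (\sum_(i < size s) c (lift ord0 i) *: s`_i).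
  by split=> //; exists (fun i => c (lift ord0 i)).
exists (fun i : 'I_(size s).+1 => if unlift ord0 i is Some j then c j else a).
rewrite big_ord_recl /= unlift_none; congr (_ + _).
by apply: eq_bigr => i _; rewrite liftK.
Qed.

Lemma free_family_leq_size (I : finType) (f : I -> V) (s : seq V) :
  (forall x, in_span s (f x)) -> free_family f -> (#|I| <= size s)%N.
Proof.
move=> sf free_f; have [C defC] := fin_all_exists sf.
pose A : 'M[F]_(#|I|, size s) := \matrix_(r, j) C (enum_val r) j.
suff /eqP <- : row_free A by exact: rank_leq_col.
rewrite -kermx_eq0; apply/eqP/row_matrixP => r; rewrite row0.
set u := row r (kermx A).
have uA : u *m A = 0 by apply/sub_kermxP; exact: row_sub.
suff u0 : forall x, u 0 (enum_rank x) = 0.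
  by apply/rowP => j; rewrite [RHS]mxE -(enum_valK j) u0.
apply: (free_f (fun x => u 0 (enum_rank x))).
under eq_bigr => x _ do rewrite defC scaler_sumr.
rewrite exchange_big /=; apply: big1 => j _.
under eq_bigr => x _ do rewrite scalerA.
rewrite -scaler_suml.
have -> : \sum_x u 0 (enum_rank x) * C x j = (u *m A) 0 j.
  rewrite !mxE [RHS](reindex (@enum_rank I)) /=; last exact/onW_bij/enum_rank_bij.
  by apply: eq_bigr => x _; rewrite [A _ _]mxE enum_rankK.
by rewrite uA mxE scale0r.
Qed.

Lemma exists_free_subfamily (W : eqType) (w0 : W) (g : W -> V) (s : seq W) :
  exists u : seq W, [/\ {subset u <= s},
     free_family (fun j : 'I_(size u) => g (nth w0 u j)) &
     forall v, in_span (map g s) v <-> in_span (map g u) v].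
Proof.
elim: s => [|x s [u [us free_u span_u]]].
  by exists [::]; split=> // c _ [].
have [gx_u|gx_u] := classic (in_span (map g u) (g x)).
  exists u; split=> [y /us|//|v]; first by rewrite inE orbC => ->.
  split=> [/in_span_cons [a [w [/span_u w_u ->]]]|/span_u v_s].
    by apply: in_spanD => //; apply: in_spanZ.
  by apply/in_span_cons; exists 0, v; rewrite scale0r add0r.
exists (x :: u); split=> [y|c|v].
- by rewrite !inE => /orP [->|/us ->]; rewrite ?orbT.
- rewrite big_ord_recl /= => sum_c0.
  suff c0 : c ord0 = 0.
    move: sum_c0; rewrite c0 scale0r add0r => /free_u cu0 i.
    by case: (unliftP ord0 i) => [j ->|->].
  have [//|c0_neq0] := eqVneq (c ord0) 0; case: gx_u.
  have -> : g x = - (c ord0)^-1 *: \sum_(i < size u) c (lift ord0 i) *: g (nth w0 u i).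
    move/eqP: sum_c0; rewrite addr_eq0 => /eqP sum_c0.
    by apply: (scalerI c0_neq0); rewrite sum_c0 scalerA mulrN mulfV // scaleN1r.
  apply/in_spanZ/in_span_sum => i; rewrite -(nth_map w0 0) //; exact: in_span_nth.
- by split=> /in_span_cons [a [w [/span_u w_u ->]]]; apply/in_span_cons; exists a, w.
Qed.

End Span.

Section Semilinear.
Variables (F F' : fieldType) (phi : F -> F') (V : lmodType F) (W : lmodType F').
Variable (f : V -> W).
Hypothesis phi1 : phi 1 = 1.
Hypothesis f_semilinear : forall a u v, f (a *: u + v) = phi a *: f u + f v.

Lemma semilinearD u v : f (u + v) = f u + f v.
Proof. by have := f_semilinear 1 u v; rewrite phi1 !scale1r. Qed.

Lemma semilinear0 : f 0 = 0.
Proof. by apply: (addIr (f 0)); rewrite -semilinearD !add0r. Qed.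

Lemma semilinearZ a u : f (a *: u) = phi a *: f u.
Proof. by rewrite -[a *: u]addr0 f_semilinear semilinear0 addr0. Qed.

Lemma semilinear_sum (I : finType) (c : I -> F) (g : I -> V) :
  f (\sum_x c x *: g x) = \sum_x phi (c x) *: f (g x).
Proof.
rewrite (big_morph f semilinearD semilinear0).
by apply: eq_bigr => x _; exact: semilinearZ.
Qed.

Lemma in_span_semilinear (s : seq V) v : in_span s v -> in_span (map f s) (f v).
Proof.
move=> [c ->]; rewrite semilinear_sum; apply: in_span_sum => i.
by rewrite -(nth_map 0 0) //; exact: in_span_nth.
Qed.

End Semilinear.

Lemma klinear_sum (F : fieldType) (V : lmodType F) (f : V -> V) :
  klinear f -> forall (I : finType) (c : I -> F) (g : I -> V),
  f (\sum_x c x *: g x) = \sum_x c x *: f (g x).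
Proof. exact: (@semilinear_sum _ _ id). Qed.

Lemma in_span_klinear (F : fieldType) (V : lmodType F) (f : V -> V) (s t : seq V) v :
  klinear f -> (forall x, x \in s -> in_span t (f x)) ->
  in_span s v -> in_span t (f v).
Proof.
move=> f_lin st [c ->]; rewrite klinear_sum //; apply: in_span_sum => j.
by apply: st; exact: mem_nth.
Qed.

Lemma in_span_trans (F : fieldType) (V : lmodType F) (s t : seq V) v :
  (forall x, x \in s -> in_span t x) -> in_span s v -> in_span t v.
Proof. exact: (@in_span_klinear _ _ id). Qed.

Section Filtration.
Variables (F : fieldType) (V : lmodType F) (Mf : nat -> seq V).
Hypothesis Mf_mono : forall i v, in_span (Mf i) v -> in_span (Mf i.+1) v.

Lemma in_span_filtration_leq i j v :
  (i <= j)%N -> in_span (Mf i) v -> in_span (Mf j) v.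
Proof.
move=> /subnKC <-; elim: (j - i)%N => [|d IHd] v_i; first by rewrite addn0.
by rewrite addnS; apply/Mf_mono/IHd.
Qed.

Lemma in_span_filtration_iter (T : V -> V) :
  (forall i v, in_span (Mf i) v -> in_span (Mf i.+1) (T v)) ->
  forall i a v, in_span (Mf i) v -> in_span (Mf (i + a)) (iter a T v).
Proof.
move=> T_step i a v v_i; elim: a => [|a IHa]; first by rewrite addn0.
by rewrite addnS iterS; apply: T_step.
Qed.

End Filtration.

Section Localization.
Variables (k : fieldType) (m : nat) (M : lmodType k) (X D : 'I_m.+1 -> M -> M).
Variables (N : lmodType (ratfun k)) (X' D' : 'I_m -> N -> N) (iota : M -> N).
Hypothesis iota_loc : is_localization X D X' D' iota.

Local Notation xn := (X ord_max).

Lemma ratfunE1 : ratfunE (1 : k)%:P = 1.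
Proof. by rewrite /ratfunE polyC1 tofrac1. Qed.

Lemma localization_semilinear a u v :
  iota (a *: u + v) = ratfunE a%:P *: iota u + iota v.
Proof. by case: iota_loc. Qed.

Lemma in_span_localization s v : in_span s v -> in_span (map iota s) (iota v).
Proof. exact: in_span_semilinear ratfunE1 localization_semilinear s v. Qed.

Lemma localization_iterX a v : iota (iter a xn v) = ratfunE 'X^a *: iota v.
Proof.
have [_ _ _ iota_xn _] := iota_loc.
elim: a => [|a IHa]; first by rewrite /ratfunE tofrac1 scale1r.
by rewrite iterS iota_xn IHa scalerA /ratfunE -rmorphM exprS.
Qed.

Lemma free_family_iterX (d : nat) (u : seq M) :
  free_family (fun j : 'I_(size u) => iota u`_j) ->
  free_family (fun p : 'I_d * 'I_(size u) => iter p.1 xn u`_p.2).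
Proof.
move=> free_u c sum_c0.
have : iota (\sum_p c p *: iter p.1 xn u`_p.2) = 0.
  by rewrite sum_c0 (semilinear0 ratfunE1 localization_semilinear).
rewrite (semilinear_sum ratfunE1 localization_semilinear).
under eq_bigr => p _ do rewrite localization_iterX scalerA /ratfunE -rmorphM mul_polyC.
pose t a j := tofrac (c (a, j) *: 'X^a) *: iota u`_j.
rewrite (eq_bigr (fun p => t p.1 p.2)); last by case.
rewrite -(pair_bigA _ t) exchange_big /= {}/t.
under eq_bigr => j _ do rewrite -scaler_suml -raddf_sum.
move=> /free_u c_poly0 [a j]; move/eqP: (c_poly0 j); rewrite tofrac_eq0 => /eqP.
move/(congr1 (coefp a)); rewrite /= coef0 coef_sum (bigD1 a) //= coefZ coefXn eqxx.
rewrite mulr1 big1 ?addr0 // => b ba; rewrite coefZ coefXn.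
by rewrite eq_sym (negbTE (ba : val b != val a)) mulr0.
Qed.

Lemma localization_size_free (d : nat) (u s : seq M) :
  free_family (fun j : 'I_(size u) => iota u`_j) ->
  (forall (a : 'I_d) (j : 'I_(size u)), in_span s (iter a xn u`_j)) ->
  (d * size u <= size s)%N.
Proof.
move=> free_u s_span.
have := free_family_leq_size (fun p => s_span p.1 p.2) (free_family_iterX free_u).
by rewrite card_prod !card_ord.
Qed.

Lemma localization_dim_bound (Mf : nat -> seq M) (eta : nat) :
  (forall i v, in_span (Mf i) v -> in_span (Mf i.+1) v) ->
  (forall i v, in_span (Mf i) v -> in_span (Mf i.+1) (xn v)) ->
  (forall i, exists s : seq M, (size s <= eta * i ^ m.+1)%N /\
     forall v, in_span (Mf i) v <-> in_span s v) ->
  forall i, exists s : seq N, (size s <= eta * 2 ^ m.+1 * i ^ m)%N /\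
     forall y, in_span (map iota (Mf i)) y <-> in_span s y.
Proof.
move=> Mf_mono Mf_xn Mf_dim i.
have [u [u_Mf free_u span_u]] := exists_free_subfamily 0 iota (Mf i).
exists (map iota u); split=> //; rewrite size_map.
have [s [size_s span_s]] := Mf_dim (i + i)%N.
have : (i.+1 * size u <= eta * (i + i) ^ m.+1)%N.
  apply: leq_trans size_s; apply: localization_size_free free_u _ => a j; apply/span_s.
  apply: (@in_span_filtration_leq _ _ _ Mf_mono (i + a)); first by rewrite leq_add2l -ltnS.
  by apply: in_span_filtration_iter => //; apply/in_span_mem/u_Mf/mem_nth.
have -> : (eta * (i + i) ^ m.+1 = i * (eta * 2 ^ m.+1 * i ^ m))%N.
  by rewrite addnn -mul2n expnMn (expnS i) !mulnA [in LHS]mulnAC (mulnC _ i) !mulnA.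
by move/leq_trans/(_ (leq_mul (leqnSn i) (leqnn _))); rewrite leq_pmul2l.
Qed.

End Localization.

Theorem proposition2p9 (k : fieldType) (chark : [pchar k] =i pred0)
    (m : nat) (M : lmodType k) (X D : 'I_m.+1 -> M -> M)
    (HM : weyl_module X D) (Hhol : holonomic X D)
    (N : lmodType (ratfun k)) (X' D' : 'I_m -> N -> N)
    (HN : weyl_module X' D') (iota : M -> N)
    (Hloc : is_localization X D X' D' iota) :
  holonomic X' D'.
Proof.
have [Mf [eta [Mf_mono Mf_exh Mf_XD Mf_dim]]] := Hhol.
have [X'_lin D'_lin _ _ _] := HN.
have [_ iota_X iota_D _ [iota_onto _]] := Hloc.
have span_loc := in_span_localization Hloc.
exists (fun i => map iota (Mf i)), (eta * 2 ^ m.+1)%N; split.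
- move=> i y; apply: in_span_trans => _ /mapP [v v_Mf ->].
  by apply/span_loc/Mf_mono/in_span_mem.
- move=> y; have [v [s [_ ->]]] := iota_onto y; have [i v_Mf] := Mf_exh v.
  by exists i; apply/in_spanZ/span_loc.
- move=> i j y y_Mf; have XD_Mf v := Mf_XD i (lift ord_max j) v.
  split; apply: in_span_klinear y_Mf => // _ /mapP [v /in_span_mem/XD_Mf [Xv Dv] ->].
    by rewrite -iota_X; exact: span_loc.
  by rewrite -iota_D; exact: span_loc.
- apply: (localization_dim_bound Hloc Mf_mono _ Mf_dim) => i v /Mf_XD.
  by case/(_ ord_max).
Qed.
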